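(* Let $G$ be a copious graph on $[n]$ which has a universal vertex. Then $G$ is topologically copious.
   Context: Setup. $G\subseteq\binom{[n]}{2}$ is a simple graph, $n\ge4$, and $G_i$ is the set of neighbours of $i$. A vertex is universal if it is adjacent to all other vertices. The kinematic space $\mathcal K_G\subseteq\mathbb C^{|G|}$ (also in $\mathbb P^{|G|-1}$) is defined by $\sum_{j\in G_i}s_{ij}=0$ for $i\in[n]$, and $\kappa(G)$ is its codimension. $\mathcal H=\bigcup_{i<j}\{x_i=x_j\}$. $\mathcal M_{0,n}$ is the moduli space of $n$ distinct points on $\mathbb P^1$ modulo $\mathrm{PGL}(2)$ (action $x_i\mapsto(ax_i+b)/(cx_i+d)$). Copious. The scattering correspondence is $$\mathcal V_G=\{(s,x)\in\mathbb P^{|G|-1}\times(\mathbb P^{n-1}\setminus\mathcal H): s\in\mathcal K_G,\ \textstyle\sum_{j\in G_i}s_{ij}/(x_i-x_j)=0\ \forall i\},$$ with projections $\mathcal K_G\leftarrow\mathcal V_G\to\mathcal M_{0,n}$ (an $x$-solution orbit is a point of $\mathcal M_{0,n}$). $G$ is copious if $\mathcal V_G\to\mathcal M_{0,n}$ is dominant and the generic fiber of $\mathcal V_G\to\mathcal K_G$ has dimension two in $\mathbb P^{n-1}$ (modulo $\mathrm{PGL}(2)$ it is finite-to-one). Topologically copious. The kinematic lattice $\Lambda_G=\mathcal K_G\cap\mathbb Z^{|G|}$ has rank $r=|G|-\kappa(G)$. For $u\in\Lambda_G$ set $\tilde u(x)=\prod_{ij\in G,\,i<j}(x_i-x_j)^{u_{ij}}$,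 a $\mathrm{PGL}(2)$-invariant regular function on $\mathcal M_{0,n}$. For a $\mathbb Z$-basis $u_1,\dots,u_r$, $\Phi_G:\mathcal M_{0,n}\to(\mathbb C^* )^r$ is $x\mapsto(\tilde u_k(x))_k$. $G$ is topologically copious if $\Phi_G$ is an embedding (an isomorphism onto its image). *)

(* complex numbers are R[i] = complex R for R : realType
   (any realType is isomorphic to the real numbers, so R[i] is C). *)
From HB Require Import structures.
From mathcomp Require Import all_boot all_order all_algebra.
From mathcomp Require Import reals complex.
From mathcomp Require Import mpoly.

Set Implicit Arguments.
Unset Strict Implicit.
Unset Printing Implicit Defensive.
Import Order.TTheory GRing.Theory Num.Theory.
Local Open Scope ring_scope.

Section Defs.
Variable R : realType.
Local Notation C := (complex R).
Variable n : nat.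
(* simple graph on [n] : symmetric irreflexive adjacency relation;
   the edge ij (i<j) carries the coordinate s i j of an n x n matrix
   (entries outside edges {i<j, adj i j} are required to vanish) *)
Variable adj : rel 'I_n.

Definition is_edge (i j : 'I_n) : bool := (i < j)%N && adj i j.

Definition sv {T} (s : 'M[T]_n) (i j : 'I_n) : T :=
  if (i < j)%N then s i j else s j i.

Definition in_K (s : 'M[C]_n) : Prop :=
  (forall i j, s i j != 0 -> is_edge i j) /\
  (forall i : 'I_n, \sum_(j | adj i j) sv s i j = 0).

Definition in_Lambda (u : 'M[int]_n) : Prop :=
  (forall i j, u i j != 0 -> is_edge i j) /\
  (forall i : 'I_n, \sum_(j | adj i j) sv u i j = 0).

(* x : 'I_n -> C with pairwise distinct coordinates (x in the complement of H,
   in an affine chart of P^{n-1}) *)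
Definition conf (x : 'I_n -> C) : Prop := injective x.

Definition scat (s : 'M[C]_n) (x : 'I_n -> C) : Prop :=
  forall i : 'I_n, \sum_(j | adj i j) sv s i j / (x i - x j) = 0.

(* x and y define the same point of M_{0,n} (same PGL(2)-orbit) *)
Definition same_orbit (x y : 'I_n -> C) : Prop :=
  exists a b c d : C, a * d - b * c != 0 /\
    forall i, c * x i + d != 0 /\ y i = (a * x i + b) / (c * x i + d).

Definition matvec (s : 'M[C]_n) : 'I_(n * n) -> C := fun k => mxvec s 0 k.

(* V_G -> M_{0,n} is dominant: the image is Zariski dense, i.e. no nonzero
   polynomial vanishes on (the preimage in configuration space of) the image *)
Definition dominant_to_M : Prop :=
  forall f : {mpoly C[n]},
    (forall x, conf x -> (exists s, s != 0 /\ in_K s /\ scat s x) ->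
       f.@[x] = 0) -> f = 0.

(* the fibre of V_G -> K_G over s is nonempty and consists of finitely many
   PGL(2)-orbits (dimension two in P^{n-1}) *)
Definition fibre_finite (s : 'M[C]_n) : Prop :=
  exists (k : nat) (X : 'I_k -> ('I_n -> C)),
    (0 < k)%N /\ (forall l, conf (X l) /\ scat s (X l)) /\
    forall x, conf x -> scat s x -> exists l, same_orbit (X l) x.

(* the generic fibre: the property holds on a nonempty Zariski open subset
   {f <> 0} of K_G *)
Definition generic_fibre_finite : Prop :=
  exists f : {mpoly C[(n * n)]},
    (exists s, in_K s /\ f.@[(matvec s)] != 0) /\
    forall s, in_K s -> s != 0 -> f.@[(matvec s)] != 0 ->
      fibre_finite s.

Definition copious : Prop := dominant_to_M /\ generic_fibre_finite.

Definition utilde (u : 'M[int]_n) (x : 'I_n -> C) : C :=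
  \prod_(i : 'I_n) \prod_(j : 'I_n | is_edge i j) (x i - x j) ^ (u i j).

Definition lattice_basis (r : nat) (U : 'I_r -> 'M[int]_n) : Prop :=
  (forall k, in_Lambda (U k)) /\
  forall u, in_Lambda u ->
    exists! c : 'I_r -> int, u = \sum_(k < r) c k *: U k.

Definition cross_ratio (x : 'I_n -> C) (i j k l : 'I_n) : C :=
  (x i - x k) * (x j - x l) / ((x i - x l) * (x j - x k)).

Definition distinct4 (i j k l : 'I_n) : bool :=
  [&& i != j, i != k, i != l, j != k, j != l & k != l].

(* Phi : M_{0,n} -> (C^* )^r is an isomorphism onto its image:
   injective on M_{0,n}, and the inverse map (image -> M_{0,n}) is regular,
   i.e. the cross-ratios (generators of the coordinate ring of M_{0,n}) are,
   near every point of the image, quotients P/Q of polynomials in the torus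
   coordinates with Q nonvanishing there *)
Definition embedding_M (r : nat) (Phi : ('I_n -> C) -> ('I_r -> C)) : Prop :=
  (forall x y, conf x -> conf y -> Phi x = Phi y -> same_orbit x y) /\
  (forall x0, conf x0 ->
     exists (Q : {mpoly C[r]})
            (P : 'I_n -> 'I_n -> 'I_n -> 'I_n -> {mpoly C[r]}),
       Q.@[(Phi x0)] != 0 /\
       forall x, conf x -> Q.@[(Phi x)] != 0 ->
         forall i j k l, distinct4 i j k l ->
           cross_ratio x i j k l * Q.@[(Phi x)] =
           (P i j k l).@[(Phi x)]).

Definition Phi_G (r : nat) (U : 'I_r -> 'M[int]_n) (x : 'I_n -> C) : 'I_r -> C :=
  fun k => utilde (U k) x.

Definition topologically_copious : Prop :=
  forall (r : nat) (U : 'I_r -> 'M[int]_n),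
    lattice_basis U -> embedding_M (Phi_G U).

Definition universal_vertex (v : 'I_n) : Prop :=
  forall w, w != v -> adj v w.

End Defs.

From HB Require Import structures.
From mathcomp Require Import all_boot all_order all_algebra.
From mathcomp Require Import reals complex mpoly ring.

(* Let v be the universal vertex and put y_p = 1 / (x_p - x_v), the coordinates after a
   Moebius map sending x_v to infinity.  For an edge ab of G - v the vector
   e_ab - e_av - e_bv has degree -2 at v and 0 elsewhere, and its monomial is
   +-(y_b - y_a); hence differences of two such vectors lie in Lambda_G, and every ratio
   (y_b - y_a) / (y_d - y_c) over edges ab, cd of G - v is a Laurent monomial in Phi_G.
   Copiousness forces G - v to be connected: otherwise dilating one side about x_v
   preserves the scattering equations and yields infinitely many PGL(2)-orbits in a
   single fibre.  Telescoping along paths of G - v then makes every normalised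
   coordinate (y_p - y_c) / (y_d - y_c) a rational function of Phi_G.  These coordinates
   determine x up to PGL(2) and express all cross-ratios, so Phi_G is an embedding. *)

Set Implicit Arguments.
Unset Strict Implicit.
Unset Printing Implicit Defensive.
Import Order.TTheory GRing.Theory Num.Theory.
Local Open Scope ring_scope.

Section ClosedField.
Variable F : closedFieldType.

Lemma exists_nonroot_neq0 (p : {poly F}) : p != 0 -> exists2 t : F, t != 0 & ~~ root p t.
Proof.
move=> p_neq0; have /closed_nonrootP[t] : 'X * p != 0 by rewrite mulf_neq0 ?polyX_eq0.
by rewrite rootM negb_or rootX => /andP[t_neq0 pt]; exists t.
Qed.

Lemma exists_neq0_notin (L : seq F) : exists2 t : F, t != 0 & t \notin L.
Proof.
have [|t t_neq0] := @exists_nonroot_neq0 (\prod_(a <- L) ('X - a%:P)).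
  by rewrite monic_neq0 // monic_prod_XsubC.
by rewrite root_prod_XsubC; exists t.
Qed.

End ClosedField.

Lemma exists_ord_notin n (s : seq 'I_n) : (size s < n)%N -> exists w, w \notin s.
Proof.
move=> lt_s_n; apply/existsP; rewrite -negb_forall; apply: contraL lt_s_n => /forallP s_full.
rewrite -leqNgt -{1}(card_ord n) (leq_trans _ (card_size s)) //.
by apply/subset_leq_card/subsetP => w _; apply: s_full.
Qed.

Section CrossRatio.
Variables (R : realType) (n : nat).
Local Notation C := (complex R).
Implicit Types (x y : 'I_n -> C) (i j k l p q : 'I_n).

Lemma conf_subr_neq0 x p q : conf x -> p != q -> x p - x q != 0.
Proof. by move=> cx; apply: contra; rewrite subr_eq0 => /eqP /cx ->. Qed.

Lemma cross_ratio_same_orbit x y i j k l : same_orbit x y -> conf x -> distinct4 i j k l ->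
  cross_ratio y i j k l = cross_ratio x i j k l.
Proof.
move=> [a [b [c [d [det_neq0 xy]]]]] cx /and5P[ij ik il jk /andP[jl kl]].
have yB p q : y p - y q = (a * d - b * c) * (x p - x q) / ((c * x p + d) * (c * x q + d)).
  have [p_neq0 ->] := xy p; have [q_neq0 ->] := xy q.
  by field; apply/andP.
have [xi _] := xy i; have [xj _] := xy j; have [xk _] := xy k; have [xl _] := xy l.
rewrite /cross_ratio !yB; field.
by rewrite !conf_subr_neq0 //= xi xj xk xl det_neq0.
Qed.

Lemma cross_ratio_ij_kl x i j k l : cross_ratio x j i l k = cross_ratio x i j k l.
Proof. by rewrite /cross_ratio; congr (_ / _); ring. Qed.

Lemma cross_ratio_ik_jl x i j k l : cross_ratio x k l i j = cross_ratio x i j k l.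
Proof. by rewrite /cross_ratio; congr (_ / _); ring. Qed.

Lemma cross_ratio_il_jk x i j k l : cross_ratio x l k j i = cross_ratio x i j k l.
Proof. by rewrite -cross_ratio_ij_kl cross_ratio_ik_jl. Qed.

Lemma distinct4_klein i j k l : distinct4 i j k l ->
  [/\ distinct4 j i l k, distinct4 k l i j & distinct4 l k j i].
Proof.
by case/and5P=> ij ik il jk /andP[jl kl]; rewrite /distinct4 !(eq_sym j i) !(eq_sym k i)
  !(eq_sym l i) !(eq_sym k j) !(eq_sym l j) !(eq_sym l k) ij ik il jk jl kl.
Qed.

End CrossRatio.

Lemma sum_antisym (T : finType) (K : numDomainType) (A : {pred T}) (F : T -> T -> K) :
  (forall i j, F j i = - F i j) -> \sum_(i in A) \sum_(j in A) F i j = 0.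
Proof.
move=> FN; set S := LHS; have SN : S = - S.
  rewrite {1}/S exchange_big -sumrN; apply: eq_bigr => i _.
  by rewrite -sumrN; apply: eq_bigr => j _; exact: FN.
have : S *+ 2 == 0 by rewrite mulr2n {2}SN subrr.
by rewrite mulrn_eq0 => /eqP.
Qed.

Section Scattering.
Variables (R : realType) (n : nat) (adj : rel 'I_n).
Local Notation C := (complex R).

Lemma svC T (s : 'M[T]_n) i j : sv s i j = sv s j i.
Proof. by rewrite /sv; case: ltngtP => // /val_inj ->. Qed.

Lemma in_KZ (s : 'M[C]_n) t : in_K adj s -> in_K adj (t *: s).
Proof.
move=> [supp sums]; split.
  move=> i j; rewrite mxE => tsij; apply: supp.
  by apply: contraNneq tsij => ->; rewrite mulr0.
move=> i; have svZ j : sv (t *: s) i j = t * sv s i j by rewrite /sv; case: ifP; rewrite mxE.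
by rewrite (eq_bigr _ (fun j _ => svZ j)) -mulr_sumr sums mulr0.
Qed.

Lemma copious_fibre_finite : copious R adj -> exists s : 'M[C]_n, fibre_finite adj s.
Proof.
move=> [dominant [f [[s0 [Ks0 fs0_neq0]] f_fibre]]].
have [s1 [s1_neq0 Ks1]] : exists s1 : 'M[C]_n, s1 != 0 /\ in_K adj s1.
  apply: boolp.contrapT => no_s1; move/eqP: (oner_neq0 {mpoly C[n]}); apply.
  by apply: dominant => x _ [s [s_neq0 [Ks _]]]; case: no_s1; exists s.
have [s0_eq0|s0_neq0] := eqVneq s0 0; last by exists s0; apply: f_fibre.
(* {f != 0} may meet K_G only at 0; then walk along the line through s1. *)
pose p : {poly C} :=
  \sum_(m <- msupp f) f@_m *: \prod_(i < n * n) (matvec s1 i *: 'X) ^+ m i.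
have pE t : p.[t] = f.@[matvec (t *: s1)].
  rewrite mevalE horner_sum; apply: eq_bigr => m _.
  rewrite hornerZ horner_prod; congr (_ * _); apply: eq_bigr => i _.
  by rewrite horner_exp hornerZ hornerX /matvec linearZ /= mxE mulrC.
have [|t t_neq0 pt] := exists_nonroot_neq0 (p := p).
  by apply: contraNneq fs0_neq0 => p0; rewrite s0_eq0 -(scale0r s1) -pE p0 horner0.
exists (t *: s1); apply: f_fibre; first exact: in_KZ.
  by rewrite scaler_eq0 negb_or t_neq0.
by rewrite -pE.
Qed.

Hypothesis adj_sym : forall i j, adj i j = adj j i.
Variable v : 'I_n.
Hypothesis v_universal : universal_vertex adj v.

Lemma adj_v i : i != v -> adj i v.
Proof. by move=> iv; rewrite adj_sym; exact: v_universal. Qed.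

Section Dilation.
Variable S : {set 'I_n}.
Hypothesis vNS : v \notin S.
Hypothesis S_closed : forall i j, adj i j -> i != v -> j != v -> (i \in S) = (j \in S).

Lemma neq_v_in_S i : i \in S -> i != v.
Proof. by apply: contraTneq => ->. Qed.

Lemma adj_notin_S i j : i \in S -> adj i j -> j \notin S -> j = v.
Proof.
move=> iS ij jNS; apply/eqP; apply: contraNT jNS => jv.
by rewrite -(S_closed ij (neq_v_in_S iS) jv).
Qed.

Lemma scat_sum_v_S (s : 'M[C]_n) x : scat adj s x ->
  \sum_(j in S) sv s v j / (x v - x j) = 0.
Proof.
(* Sum the equations of the vertices of S: the S x S terms cancel by antisymmetry. *)
move=> sc; pose F i j := if adj i j then sv s i j / (x i - x j) else 0.
have FN i j : F j i = - F i j.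
  by rewrite /F adj_sym svC -opprB invrN mulrN; case: ifP; rewrite ?oppr0.
have scS i : i \in S -> \sum_(j | adj i j) sv s i j / (x i - x j) =
    \sum_(j in S) F i j + sv s i v / (x i - x v).
  move=> iS; rewrite (bigID (mem S)) /=; congr (_ + _).
    rewrite big_mkcond [RHS]big_mkcond; apply: eq_bigr => j _ /=.
    by rewrite /F; case: (adj i j); case: (j \in S).
  apply: big_pred1 => j; apply/andP/eqP => [[ij jNS]|->]; first exact: adj_notin_S ij jNS.
  by split; [exact: adj_v (neq_v_in_S iS)|].
have sum_iv : \sum_(i in S) sv s i v / (x i - x v) = 0.
  transitivity (\sum_(i in S) (\sum_(j in S) F i j + sv s i v / (x i - x v))
      - \sum_(i in S) \sum_(j in S) F i j).
    by rewrite big_split /= addrAC subrr add0r.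
  by rewrite sum_antisym // subr0; apply: big1 => i iS; rewrite -scS //; exact: sc.
apply/eqP; rewrite -oppr_eq0 -sumrN -[X in _ == X]sum_iv; apply/eqP.
apply: eq_bigr => j _.
by rewrite svC -[x v - x j]opprB invrN mulrN opprK.
Qed.

Definition dilate (x : 'I_n -> C) (t : C) (i : 'I_n) : C :=
  if i \in S then x v + t * (x i - x v) else x i.

Lemma scat_dilate (s : 'M[C]_n) x t : t != 0 -> scat adj s x -> scat adj s (dilate x t).
Proof.
move=> t_neq0 sc i.
have dilate_v : dilate x t v = x v by rewrite /dilate (negbTE vNS).
have [iS|iNS] := boolP (i \in S).
  transitivity (t^-1 * \sum_(j | adj i j) sv s i j / (x i - x j)); last by rewrite sc mulr0.
  rewrite mulr_sumr; apply: eq_bigr => j ij.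
  have -> : dilate x t i - dilate x t j = t * (x i - x j).
    rewrite /dilate iS; have [jS|jNS] := boolP (j \in S); first by ring.
    by rewrite (adj_notin_S iS ij jNS); ring.
  by rewrite invfM mulrCA.
have [->|iv] := eqVneq i v; last first.
  rewrite -[RHS](sc i); apply: eq_bigr => j ij; rewrite /dilate (negbTE iNS).
  have [jS|//] := boolP (j \in S).
  by move: iNS; rewrite (S_closed ij iv (neq_v_in_S jS)) jS.
have adj_vS j : adj v j && (j \in S) = (j \in S).
  by case: (boolP (j \in S)) => jS; rewrite ?andbF ?andbT ?v_universal ?neq_v_in_S.
have dilate_S : \sum_(j in S) sv s v j / (x v - dilate x t j) = 0.
  transitivity (t^-1 * \sum_(j in S) sv s v j / (x v - x j)).
    rewrite mulr_sumr; apply: eq_bigr => j jS.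
    have -> : x v - dilate x t j = t * (x v - x j) by rewrite /dilate jS; ring.
    by rewrite invfM mulrCA.
  by rewrite scat_sum_v_S // mulr0.
rewrite dilate_v -[RHS](sc v) [LHS](bigID (mem S)) [RHS](bigID (mem S)) /=.
rewrite !(eq_bigl _ _ adj_vS) dilate_S scat_sum_v_S // !add0r.
by apply: eq_bigr => j /andP[_ jNS]; rewrite /dilate (negbTE jNS).
Qed.

Lemma conf_dilate x t : conf x -> t != 0 ->
  t \notin [seq (x j - x v) / (x i - x v) | i <- enum 'I_n, j <- enum 'I_n] ->
  conf (dilate x t).
Proof.
move=> cx t_neq0 t_ratios.
have dilate_out i j : i \in S -> j \notin S -> x v + t * (x i - x v) != x j.
  move=> iS jNS; apply: contraNneq t_ratios => xij; apply/allpairsP; exists (i, j).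
  by rewrite !mem_enum -xij; split=> //=; field; rewrite conf_subr_neq0 ?neq_v_in_S.
move=> i j; rewrite /dilate.
case: (boolP (i \in S)) => iS; case: (boolP (j \in S)) => jS.
- by move=> /addrI /(mulfI t_neq0) /addIr /cx.
- by move/eqP; rewrite (negbTE (dilate_out _ _ iS jS)).
- by move/esym/eqP; rewrite (negbTE (dilate_out _ _ jS iS)).
- exact: cx.
Qed.

Definition dilation_factor x a b1 b2 (w : C) : C :=
  (x v - x b2) / (x a - x v) / (w * (x b1 - x b2) / (x b1 - x v) - 1).

Lemma dilation_factor_cross_ratio x t a b1 b2 : conf x -> t != 0 ->
  a \in S -> b1 \notin S -> b2 \notin S -> b1 != v -> b2 != v -> b1 != b2 ->
  dilation_factor x a b1 b2 (cross_ratio (dilate x t) a b1 b2 v) = t.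
Proof.
move=> cx t_neq0 aS b1NS b2NS b1v b2v b12.
have xav := conf_subr_neq0 cx (neq_v_in_S aS).
have xb1v := conf_subr_neq0 cx b1v; have xb12 := conf_subr_neq0 cx b12.
have xvb2 : x v - x b2 != 0 by rewrite conf_subr_neq0 // eq_sym.
rewrite /dilation_factor /cross_ratio /dilate aS (negbTE b1NS) (negbTE b2NS) (negbTE vNS).
have -> : x v + t * (x a - x v) - x v = t * (x a - x v) by ring.
have -> : (x v + t * (x a - x v) - x b2) * (x b1 - x v) /
    (t * (x a - x v) * (x b1 - x b2)) * (x b1 - x b2) / (x b1 - x v) - 1
    = (x v - x b2) / (t * (x a - x v)).
  by field; rewrite xav t_neq0 xb1v xb12.
by field; rewrite xav t_neq0 xvb2.
Qed.

Lemma fibre_finite_no_split (s : 'M[C]_n) a b1 b2 : fibre_finite adj s ->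
  a \in S -> b1 \notin S -> b2 \notin S -> b1 != v -> b2 != v -> b1 != b2 -> False.
Proof.
move=> [k [X [k_gt0 [X_sol X_orbits]]]] aS b1NS b2NS b1v b2v b12.
have [cx sx] := X_sol (Ordinal k_gt0); set x := X _ in cx sx.
pose ratios := [seq (x j - x v) / (x i - x v) | i <- enum 'I_n, j <- enum 'I_n].
pose bad := [seq dilation_factor x a b1 b2 (cross_ratio (X l) a b1 b2 v) | l <- enum 'I_k].
have [t t_neq0] := exists_neq0_notin (ratios ++ bad).
rewrite mem_cat negb_or => /andP[t_ratios t_bad].
have [l orbit_l] := X_orbits _ (conf_dilate cx t_neq0 t_ratios) (scat_dilate t_neq0 sx).
have [cXl _] := X_sol l.
have aNb b : b \notin S -> a != b by apply: contraNneq => <-.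
have d4 : distinct4 a b1 b2 v by rewrite /distinct4 !aNb // b12 b1v b2v.
move/negP: t_bad; apply; apply/mapP; exists l; first by rewrite mem_enum.
by rewrite -(cross_ratio_same_orbit orbit_l cXl d4) dilation_factor_cross_ratio.
Qed.

End Dilation.

Definition adj_del := [rel i j | [&& adj i j, i != v & j != v]].

Lemma connect_adj_del : (4 <= n)%N -> copious R adj ->
  forall c i, c != v -> i != v -> connect adj_del c i.
Proof.
move=> n_ge4 /copious_fibre_finite[s fin_s] c i cv iv; apply: boolp.contrapT => /negP ciN.
have conn_adj p q : adj p q -> p != v -> q != v ->
    connect adj_del c p = connect adj_del c q.
  move=> pq pv qv; apply/idP/idP => cp; apply: connect_trans cp (connect1 _) => /=.
    by rewrite pq pv qv.
  by rewrite adj_sym pq pv qv.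
pose S := [set j | (j != v) && connect adj_del c j].
pose T := [set j | (j != v) && ~~ connect adj_del c j].
have S_closed p q : adj p q -> p != v -> q != v -> (p \in S) = (q \in S).
  by move=> pq pv qv; rewrite !inE pv qv (conn_adj p q).
have T_closed p q : adj p q -> p != v -> q != v -> (p \in T) = (q \in T).
  by move=> pq pv qv; rewrite !inE pv qv (conn_adj p q).
have vNS : v \notin S by rewrite inE eqxx.
have vNT : v \notin T by rewrite inE eqxx.
have [|w] := @exists_ord_notin n [:: v; c; i]; first exact: leq_trans n_ge4.
rewrite !inE !negb_or => /and3P[wv wc wi].
(* Whichever side w lies on, that side has two vertices and the other one. *)
have [wS|wNS] := boolP (w \in S).
  apply: (fibre_finite_no_split vNT T_closed (a := i) (b1 := c) (b2 := w) fin_s).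
  - by rewrite inE iv ciN.
  - by rewrite inE cv connect0.
  - by move: wS; rewrite !inE wv /= => ->.
  - exact: cv.
  - exact: wv.
  - by rewrite eq_sym.
apply: (fibre_finite_no_split vNS S_closed (a := c) (b1 := i) (b2 := w) fin_s) => //.
- by rewrite inE cv connect0.
- by rewrite inE (negbTE ciN) andbF.
- by rewrite eq_sym.
Qed.

End Scattering.

Section RationalFunctions.
Variables (F : fieldType) (T : Type) (D : T -> Prop) (r : nat) (Phi : T -> 'I_r -> F).

Definition ratfun (f : T -> F) := exists A B : {mpoly F[r]},
  forall x, D x -> B.@[Phi x] != 0 /\ f x = A.@[Phi x] / B.@[Phi x].

Lemma eq_ratfun f g : (forall x, D x -> f x = g x) -> ratfun f -> ratfun g.
Proof.
move=> fg [A [B fAB]]; exists A, B => x Dx; have [B_neq0 fx] := fAB x Dx.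
by rewrite -fg.
Qed.

Lemma ratfun_cst c : ratfun (fun _ => c).
Proof. by exists c%:MP, 1 => x _; rewrite mevalC meval1 divr1 oner_neq0. Qed.

Lemma ratfun_coord k : ratfun (fun x => Phi x k).
Proof. by exists 'X_k, 1 => x _; rewrite mevalXU meval1 divr1 oner_neq0. Qed.

Lemma ratfunD f g : ratfun f -> ratfun g -> ratfun (fun x => f x + g x).
Proof.
move=> [A1 [B1 fAB]] [A2 [B2 gAB]]; exists (A1 * B2 + A2 * B1), (B1 * B2) => x Dx.
have [B1x fx] := fAB x Dx; have [B2x gx] := gAB x Dx.
rewrite mevalD !mevalM mulf_neq0 // fx gx; split=> //; field.
by rewrite B1x B2x.
Qed.

Lemma ratfunN f : ratfun f -> ratfun (fun x => - f x).
Proof.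
move=> [A [B fAB]]; exists (- A), B => x Dx; have [Bx fx] := fAB x Dx.
by rewrite mevalN fx mulNr.
Qed.

Lemma ratfunB f g : ratfun f -> ratfun g -> ratfun (fun x => f x - g x).
Proof. by move=> rf rg; apply: ratfunD rf (ratfunN rg). Qed.

Lemma ratfunM f g : ratfun f -> ratfun g -> ratfun (fun x => f x * g x).
Proof.
move=> [A1 [B1 fAB]] [A2 [B2 gAB]]; exists (A1 * A2), (B1 * B2) => x Dx.
have [B1x fx] := fAB x Dx; have [B2x gx] := gAB x Dx.
rewrite !mevalM mulf_neq0 // fx gx; split=> //; field.
by rewrite B1x B2x.
Qed.

Lemma ratfunV f : ratfun f -> (forall x, D x -> f x != 0) ->
  ratfun (fun x => (f x)^-1).
Proof.
move=> [A [B fAB]] f_neq0; exists B, A => x Dx; have [Bx fx] := fAB x Dx.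
split; last by rewrite fx invf_div.
by apply: contra (f_neq0 x Dx) => /eqP Ax; rewrite fx Ax mul0r.
Qed.

Lemma ratfun_div f g : ratfun f -> ratfun g -> (forall x, D x -> g x != 0) ->
  ratfun (fun x => f x / g x).
Proof. by move=> rf rg g_neq0; apply: ratfunM rf (ratfunV rg g_neq0). Qed.

Lemma ratfun_prod (I : Type) (s : seq I) (f : I -> T -> F) :
  (forall i, ratfun (f i)) -> ratfun (fun x => \prod_(i <- s) f i x).
Proof.
move=> rf; elim: s => [|i s IHs].
  by apply: eq_ratfun (ratfun_cst 1) => x _; rewrite big_nil.
by apply: eq_ratfun (ratfunM (rf i) IHs) => x _; rewrite big_cons.
Qed.

Lemma ratfun_expz f : ratfun f -> (forall x, D x -> f x != 0) ->
  forall z : int, ratfun (fun x => f x ^ z).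
Proof.
move=> rf f_neq0; have rfX m : ratfun (fun x => f x ^+ m).
  elim: m => [|m IHm]; first by apply: eq_ratfun (ratfun_cst 1) => x _; rewrite expr0.
  by apply: eq_ratfun (ratfunM rf IHm) => x _; rewrite exprS.
case=> m; first exact: rfX.
apply: eq_ratfun (ratfunV (rfX m.+1) _) => // x Dx.
exact: expf_neq0 (f_neq0 x Dx).
Qed.

Lemma ratfun_congr f x y : ratfun f -> D x -> D y -> Phi x = Phi y -> f x = f y.
Proof. by move=> [A [B fAB]] Dx Dy Phixy; rewrite (fAB x Dx).2 (fAB y Dy).2 Phixy. Qed.

Lemma ratfun_common_denom (I : finType) (f : I -> T -> F) :
  (forall i, ratfun (f i)) -> exists (Q : {mpoly F[r]}) (P : I -> {mpoly F[r]}),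
    forall x, D x -> Q.@[Phi x] != 0 /\ forall i, f i x * Q.@[Phi x] = (P i).@[Phi x].
Proof.
move=> rf; have /fin_all_exists[A rfA] : forall i, exists A, exists B : {mpoly F[r]},
    forall x, D x -> B.@[Phi x] != 0 /\ f i x = A.@[Phi x] / B.@[Phi x] by [].
have /fin_all_exists[B rfAB] := rfA.
have mevalP z (P : pred I) :
    (\prod_(i | P i) B i).@[z] = \prod_(i | P i) (B i).@[z].
  exact: (big_morph _ (mevalM z) (meval1 z)).
exists (\prod_i B i), (fun i => A i * \prod_(j | j != i) B j) => x Dx; split.
  by rewrite mevalP; apply/prodf_neq0 => i _; have [] := rfAB i x Dx.
move=> i; have [Bix ->] := rfAB i x Dx.
by rewrite mevalP (bigD1 i) //= mevalM mevalP mulrA divfK.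
Qed.

End RationalFunctions.

Lemma ord_neq_ltn n (p q : 'I_n) : p != q -> (p < q)%N || (q < p)%N.
Proof. by rewrite -val_eqE neq_ltn. Qed.

Section Lattice.
Variables (n : nat) (adj : rel 'I_n).
Hypothesis adj_sym : forall i j, adj i j = adj j i.

Definition edge_vec (p q : 'I_n) : 'M[int]_n :=
  if (p < q)%N then delta_mx p q else delta_mx q p.

Definition supported (u : 'M[int]_n) := forall i j, u i j != 0 -> is_edge adj i j.

Definition degree (u : 'M[int]_n) i := \sum_(j | adj i j) sv u i j.

Lemma supportedD u w : supported u -> supported w -> supported (u + w).
Proof.
move=> su sw i j; rewrite mxE; have [uij0|/su //] := eqVneq (u i j) 0.
by rewrite uij0 add0r; exact: sw.
Qed.

Lemma supportedN u : supported u -> supported (- u).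
Proof. by move=> su i j; rewrite mxE oppr_eq0; exact: su. Qed.

Lemma degreeD u w i : degree (u + w) i = degree u i + degree w i.
Proof.
by rewrite /degree -big_split; apply: eq_bigr => j _; rewrite /sv; case: ifP; rewrite mxE.
Qed.

Lemma degreeN u i : degree (- u) i = - degree u i.
Proof.
by rewrite /degree -sumrN; apply: eq_bigr => j _; rewrite /sv; case: ifP; rewrite mxE.
Qed.

Lemma sv_delta (p q i j : 'I_n) : (p < q)%N ->
  sv (delta_mx p q : 'M[int]_n) i j = ((i == p) && (j == q) || (i == q) && (j == p))%:R.
Proof.
move=> pq; rewrite /sv; case: ifP => ij; rewrite mxE.
  suff -> : (i == q) && (j == p) = false by rewrite orbF.
  by apply/andP=> -[/eqP iq /eqP jp]; move: ij; rewrite iq jp => /(ltn_trans pq); rewrite ltnn.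
suff -> : (i == p) && (j == q) = false by rewrite andbC.
by apply/andP=> -[/eqP ip /eqP jq]; move: ij; rewrite ip jq pq.
Qed.

Lemma sv_edge_vec (p q i j : 'I_n) : p != q ->
  sv (edge_vec p q) i j = ((i == p) && (j == q) || (i == q) && (j == p))%:R.
Proof.
rewrite /edge_vec => /ord_neq_ltn; case: ifP => [pq _|_ /= qp]; first exact: sv_delta.
by rewrite sv_delta // orbC.
Qed.

Lemma supported_edge_vec p q : adj p q -> p != q -> supported (edge_vec p q).
Proof.
move=> apq /ord_neq_ltn pq i j; rewrite /edge_vec /is_edge.
case: ifP => [p_lt_q|p_ge_q]; rewrite mxE;
  case: (boolP ((i == _) && (j == _))) => //= /andP[/eqP -> /eqP ->] _.
  by rewrite p_lt_q apq.
by move: pq; rewrite p_ge_q /= => ->; rewrite adj_sym.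
Qed.

Lemma degree_edge_vec p q i : adj p q -> p != q ->
  degree (edge_vec p q) i = (i == p)%:R + (i == q)%:R.
Proof.
move=> apq pq; rewrite /degree (eq_bigr _ (fun j _ => sv_edge_vec i j pq)).
have [->|ip] := eqVneq i p.
  rewrite (negbTE pq) addr0 (bigD1 q) //= !eqxx big1 ?addr0 // => j /andP[_ jq].
  by rewrite (negbTE jq).
have [->|iq] := eqVneq i q.
  rewrite (bigD1 p) /=; last by rewrite adj_sym.
  by rewrite eqxx big1 ?addr0 // => j /andP[_ jp]; rewrite (negbTE jp).
by rewrite big1 ?addr0 // => j _.
Qed.

Variable v : 'I_n.
Hypothesis v_universal : universal_vertex adj v.

Definition hvec a b := edge_vec a b - edge_vec a v - edge_vec b v.

Lemma supported_hvec a b : adj a b -> a != v -> b != v -> a != b -> supported (hvec a b).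
Proof.
move=> ab av bv a_neq_b.
by rewrite /hvec; do 2?[apply: supportedD; last apply: supportedN];
  apply: supported_edge_vec => //; exact: (adj_v adj_sym v_universal).
Qed.

Lemma degree_hvec a b i : adj a b -> a != v -> b != v -> a != b ->
  degree (hvec a b) i = - (i == v)%:R *+ 2.
Proof.
move=> ab av bv a_neq_b.
by rewrite /hvec !degreeD !degreeN !degree_edge_vec ?(adj_v adj_sym v_universal) //; ring.
Qed.

Lemma in_Lambda_hvecB a b c d : adj a b -> a != v -> b != v -> a != b ->
  adj c d -> c != v -> d != v -> c != d -> in_Lambda adj (hvec a b - hvec c d).
Proof.
move=> ab av bv a_neq_b cd cv dv c_neq_d; split.
  by apply: supportedD; last apply: supportedN; exact: supported_hvec.
by move=> i; rewrite -/(degree _ i) degreeD degreeN !degree_hvec // subrr.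
Qed.

End Lattice.

Section Utilde.
Variables (R : realType) (n : nat) (adj : rel 'I_n).
Local Notation C := (complex R).
Implicit Types (x : 'I_n -> C) (u w : 'M[int]_n).

Lemma utilde_neq0 u x : conf x -> utilde adj u x != 0.
Proof.
move=> cx; apply/prodf_neq0 => i _; apply/prodf_neq0 => j /andP[ij _].
by apply/expfz_neq0/conf_subr_neq0; rewrite // -val_eqE neq_ltn ij.
Qed.

Lemma utilde0 x : utilde adj 0 x = 1.
Proof. by apply: big1 => i _; apply: big1 => j _; rewrite mxE expr0z. Qed.

Lemma utildeD u w x : conf x -> utilde adj (u + w) x = utilde adj u x * utilde adj w x.
Proof.
move=> cx; rewrite /utilde -big_split; apply: eq_bigr => i _.
rewrite -big_split; apply: eq_bigr => j /andP[ij _]; rewrite mxE expfzDr //.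
by apply: conf_subr_neq0; rewrite // -val_eqE neq_ltn ij.
Qed.

Lemma utildeB u w x : conf x -> utilde adj (u - w) x = utilde adj u x / utilde adj w x.
Proof.
move=> cx; have := utildeD (u - w) w cx; rewrite subrK => ->.
by rewrite mulfK // utilde_neq0.
Qed.

Lemma utilde_sum r (M : 'I_r -> 'M[int]_n) x : conf x ->
  utilde adj (\sum_(k < r) M k) x = \prod_(k < r) utilde adj (M k) x.
Proof.
by move=> cx; apply: (big_morph (utilde adj ^~ x) (fun u w => utildeD u w cx) (utilde0 x)).
Qed.

Lemma utildeZ (z : int) u x : utilde adj (z *: u) x = utilde adj u x ^ z.
Proof.
have expz_prod I (s : seq I) P (F : I -> C) :
    (\prod_(i <- s | P i) F i) ^ z = \prod_(i <- s | P i) F i ^ z.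
  exact: (big_morph (fun a : C => a ^ z) (fun a b => expfzMl a b z) (exp1rz _ z)).
rewrite /utilde expz_prod; apply: eq_bigr => i _; rewrite expz_prod.
by apply: eq_bigr => j _; rewrite mxE exprz_exp mulrC.
Qed.

Lemma utilde_delta p q x : is_edge adj p q -> utilde adj (delta_mx p q) x = x p - x q.
Proof.
move=> pq; rewrite /utilde (bigD1 p) //= (bigD1 q) //= mxE !eqxx expr1z.
rewrite big1 => [|j /andP[_ jq]]; last by rewrite mxE (negbTE jq) andbF expr0z.
rewrite mulr1 big1 ?mulr1 // => i ip.
by rewrite big1 // => j _; rewrite mxE (negbTE ip) expr0z.
Qed.

Definition edge_sign (p q : 'I_n) : C := if (p < q)%N then 1 else -1.

Lemma edge_sign_neq0 p q : edge_sign p q != 0.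
Proof. by rewrite /edge_sign; case: ifP; rewrite ?oppr_eq0 oner_neq0. Qed.

Hypothesis adj_sym : forall i j, adj i j = adj j i.

Lemma utilde_edge_vec x p q : adj p q -> p != q ->
  utilde adj (edge_vec p q) x = edge_sign p q * (x p - x q).
Proof.
move=> pq /ord_neq_ltn p_neq_q; rewrite /edge_vec /edge_sign.
case: ifP p_neq_q => [p_lt_q _|_ /= q_lt_p].
  by rewrite utilde_delta ?mul1r // /is_edge p_lt_q pq.
by rewrite utilde_delta; [ring | rewrite /is_edge q_lt_p adj_sym].
Qed.

Lemma ratfun_utilde r (U : 'I_r -> 'M[int]_n) u :
  lattice_basis adj U -> in_Lambda adj u -> ratfun (@conf R n) (Phi_G adj U) (utilde adj u).
Proof.
move=> [_ U_span] Lu; have [z [-> _]] := U_span u Lu.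
have rat_prod :
    ratfun (@conf R n) (Phi_G adj U) (fun x => \prod_(k < r) Phi_G adj U x k ^ z k).
  apply: ratfun_prod => k; apply: ratfun_expz; first exact: ratfun_coord.
  by move=> x cx; rewrite /Phi_G utilde_neq0.
apply: eq_ratfun rat_prod => x cx.
by rewrite utilde_sum //; apply: eq_bigr => k _; rewrite utildeZ.
Qed.

End Utilde.

Section Embedding.
Variables (R : realType) (n : nat) (adj : rel 'I_n).
Local Notation C := (complex R).
Hypothesis adj_sym : forall i j, adj i j = adj j i.
Hypothesis adj_irr : forall i, adj i i = false.
Variable v : 'I_n.
Hypothesis v_universal : universal_vertex adj v.
Variables c d : 'I_n.
Hypotheses (cd : adj c d) (cv : c != v) (dv : d != v).
Hypothesis connected : forall i, i != v -> connect (adj_del adj v) c i.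
Variables (r : nat) (U : 'I_r -> 'M[int]_n).
Hypothesis U_basis : lattice_basis adj U.

Local Notation Phi := (Phi_G adj U).
Local Notation ratfun := (ratfun (@conf R n) Phi).
Implicit Types (x y : 'I_n -> C) (a b i j k l p q : 'I_n).

Lemma adj_neq a b : adj a b -> a != b.
Proof. by apply: contraTneq => ->; rewrite adj_irr. Qed.

Definition ycoord x p := (x p - x v)^-1.

Lemma ycoordB x p q : conf x -> p != v -> q != v ->
  ycoord x p - ycoord x q = (x q - x p) / ((x p - x v) * (x q - x v)).
Proof. by move=> cx pv qv; rewrite /ycoord; field; rewrite !conf_subr_neq0. Qed.

Lemma ycoordB_neq0 x p q : conf x -> p != v -> q != v -> p != q ->
  ycoord x p - ycoord x q != 0.
Proof.
move=> cx pv qv pq; rewrite ycoordB // mulf_neq0 ?invr_eq0 ?mulf_neq0 ?conf_subr_neq0 //.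
by rewrite eq_sym.
Qed.

Definition hsign a b : C := edge_sign R a b / (edge_sign R a v * edge_sign R b v).

Lemma hsign_neq0 a b : hsign a b != 0.
Proof. by rewrite /hsign mulf_neq0 ?invr_eq0 ?mulf_neq0 ?edge_sign_neq0. Qed.

Lemma utilde_hvec x a b : conf x -> adj a b -> a != v -> b != v ->
  utilde adj (hvec v a b) x = hsign a b * (ycoord x b - ycoord x a).
Proof.
move=> cx ab av bv; have avj := adj_v adj_sym v_universal.
have [a_v b_v] := (avj a av, avj b bv).
rewrite /hvec !utildeB // !utilde_edge_vec ?adj_neq // ycoordB // /hsign; field.
by rewrite !edge_sign_neq0 !conf_subr_neq0 ?adj_neq.
Qed.

Lemma ratfun_ycoord_edge a b : adj a b -> a != v -> b != v ->
  ratfun (fun x => (ycoord x b - ycoord x a) / (ycoord x d - ycoord x c)).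
Proof.
move=> ab av bv.
have L := in_Lambda_hvecB adj_sym v_universal ab av bv (adj_neq ab) cd cv dv (adj_neq cd).
apply: eq_ratfun (ratfunM (ratfun_cst _ _ (hsign c d / hsign a b))
  (ratfun_utilde R U_basis L)) => x cx.
rewrite utildeB // !utilde_hvec //; field.
by rewrite !hsign_neq0 ycoordB_neq0 // eq_sym adj_neq.
Qed.

Definition ncoord x p := (ycoord x p - ycoord x c) / (ycoord x d - ycoord x c).

Lemma ratfun_ncoord p : p != v -> ratfun (ncoord^~ p).
Proof.
move=> pv; have /connectP[s c_s ->] := connected pv.
have ratfun_c : ratfun (ncoord^~ c).
  by apply: eq_ratfun (ratfun_cst _ _ 0) => x _; rewrite /ncoord subrr mul0r.
elim: s c c_s ratfun_c => [|b s IHs] a //= /andP[/and3P[ab av bv] b_s] ratfun_a.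
apply: IHs b_s _; apply: eq_ratfun (ratfunD ratfun_a (ratfun_ycoord_edge ab av bv)) => x _.
by rewrite /ncoord -mulrDl; congr (_ * _); ring.
Qed.

Lemma ncoordB x p q :
  ncoord x p - ncoord x q = (ycoord x p - ycoord x q) / (ycoord x d - ycoord x c).
Proof. by rewrite /ncoord -mulrBl; congr (_ * _); ring. Qed.

Lemma ratfun_ycoord_ratio p q p' q' : p != v -> q != v -> p' != v -> q' != v -> p' != q' ->
  ratfun (fun x => (ycoord x p - ycoord x q) / (ycoord x p' - ycoord x q')).
Proof.
move=> pv qv p'v q'v p'q'; have dc_neq0 x : conf x -> ycoord x d - ycoord x c != 0.
  by move=> cx; rewrite ycoordB_neq0 // eq_sym adj_neq.
apply: eq_ratfun (ratfun_div (ratfunB (ratfun_ncoord pv) (ratfun_ncoord qv))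
  (ratfunB (ratfun_ncoord p'v) (ratfun_ncoord q'v)) _) => [x cx|x cx].
  by rewrite !ncoordB; field; rewrite dc_neq0 // ycoordB_neq0.
by rewrite ncoordB mulf_neq0 ?invr_eq0 ?dc_neq0 ?ycoordB_neq0.
Qed.

Lemma cross_ratio_ycoord x i j k l : conf x -> distinct4 i j k l ->
  i != v -> j != v -> k != v -> l != v -> cross_ratio x i j k l =
  (ycoord x i - ycoord x k) / (ycoord x i - ycoord x l) *
  ((ycoord x j - ycoord x l) / (ycoord x j - ycoord x k)).
Proof.
move=> cx /and5P[ij ik il jk /andP[jl kl]] iv jv kv lv.
rewrite /cross_ratio !ycoordB //; field.
by rewrite !conf_subr_neq0 // eq_sym.
Qed.

Lemma cross_ratio_ycoord_v x i j k : conf x -> distinct4 i j k v ->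
  cross_ratio x i j k v = (ycoord x k - ycoord x i) / (ycoord x k - ycoord x j).
Proof.
move=> cx /and5P[ij ik iv jk /andP[jv kv]].
rewrite /cross_ratio !ycoordB //; field.
by rewrite !conf_subr_neq0 // eq_sym.
Qed.

Lemma ratfun_cross_ratio i j k l : distinct4 i j k l ->
  ratfun (fun x => cross_ratio x i j k l).
Proof.
have ratfun_vl i' j' k' l' : distinct4 i' j' k' l' -> i' != v -> j' != v -> k' != v ->
    ratfun (fun x => cross_ratio x i' j' k' l').
  move=> d4 iv jv kv; have [lv|lv] := eqVneq l' v.
    rewrite lv in d4 *; apply: eq_ratfun (ratfun_ycoord_ratio kv iv kv jv _) => [x cx|].
      by rewrite cross_ratio_ycoord_v.
    by case/and5P: d4 => _ _ _ + _; rewrite eq_sym.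
  case/and5P: (d4) => _ ik il jk /andP[jl _].
  apply: eq_ratfun (ratfunM (ratfun_ycoord_ratio iv kv iv lv il)
    (ratfun_ycoord_ratio jv lv jv kv jk)) => x cx.
  by rewrite cross_ratio_ycoord.
(* The Klein four-group fixes cross-ratios; use it to move v to the last slot. *)
move=> d4; have [d4_ij_kl d4_ik_jl d4_il_jk] := distinct4_klein d4.
case/and5P: (d4) => ij ik il jk /andP[jl kl].
have [iv|iv] := eqVneq i v.
  by apply: eq_ratfun (ratfun_vl _ _ _ _ d4_il_jk _ _ _) => [x _|||];
    rewrite 1?cross_ratio_il_jk // -iv eq_sym.
have [jv|jv] := eqVneq j v.
  by apply: eq_ratfun (ratfun_vl _ _ _ _ d4_ik_jl _ _ _) => [x _|||];
    rewrite 1?cross_ratio_ik_jl // -jv eq_sym.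
have [kv|kv] := eqVneq k v.
  by apply: eq_ratfun (ratfun_vl _ _ _ _ d4_ij_kl _ _ _) => [x _|||];
    rewrite 1?cross_ratio_ij_kl // -kv eq_sym.
exact: ratfun_vl.
Qed.

Lemma same_orbit_Phi x y : conf x -> conf y -> Phi x = Phi y -> same_orbit x y.
Proof.
move=> cx cy Phixy.
have E_neq0 z : conf z -> ycoord z d - ycoord z c != 0.
  by move=> cz; rewrite ycoordB_neq0 // eq_sym adj_neq.
pose lam := (ycoord y d - ycoord y c) / (ycoord x d - ycoord x c).
pose mu := ycoord y c - lam * ycoord x c.
have lam_neq0 : lam != 0 by rewrite mulf_neq0 ?invr_eq0 ?E_neq0.
have y_affine p : p != v -> ycoord y p = lam * ycoord x p + mu.
  move=> pv; have := ratfun_congr (ratfun_ncoord pv) cx cy Phixy.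
  rewrite /ncoord /mu /lam => ncoord_xy.
  have -> : ycoord y p = ycoord y c + (ycoord y d - ycoord y c) *
      ((ycoord y p - ycoord y c) / (ycoord y d - ycoord y c)) by field; rewrite E_neq0.
  by rewrite -ncoord_xy; field; rewrite E_neq0.
exists (1 + mu * y v), (lam * y v - x v - mu * x v * y v), mu, (lam - mu * x v); split.
  by have -> : (1 + mu * y v) * (lam - mu * x v) - (lam * y v - x v - mu * x v * y v) * mu
    = lam by ring.
move=> p; have [->|pv] := eqVneq p v.
  have -> : mu * x v + (lam - mu * x v) = lam by ring.
  by split=> //; field.
have := y_affine p pv; rewrite /ycoord => yp.
have xpv := conf_subr_neq0 cx pv; have ypv := conf_subr_neq0 cy pv.
have lamE : lam = ((y p - y v)^-1 - mu) * (x p - x v) by rewrite yp; field.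
have -> : mu * x p + (lam - mu * x v) = (x p - x v) / (y p - y v) by rewrite lamE; field.
by rewrite mulf_neq0 ?invr_eq0 //; split=> //; rewrite lamE; field; rewrite xpv ypv.
Qed.

Lemma embedding_Phi : @embedding_M R n r Phi.
Proof.
split; first exact: same_orbit_Phi.
move=> x0 cx0; pose quad := ('I_n * 'I_n * 'I_n * 'I_n)%type.
pose cr (q : quad) x := if distinct4 q.1.1.1 q.1.1.2 q.1.2 q.2
  then cross_ratio x q.1.1.1 q.1.1.2 q.1.2 q.2 else 0.
have [|Q [P QP]] := @ratfun_common_denom _ _ (@conf R n) r Phi quad cr.
  move=> [[[i j] k] l]; rewrite /cr /=.
  case: (boolP (distinct4 i j k l)) => [d4|_]; last exact: ratfun_cst.
  exact: ratfun_cross_ratio.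
exists Q, (fun i j k l => P (i, j, k, l)); split; first exact: (QP x0 cx0).1.
move=> x cx _ i j k l d4; have [_ crQ] := QP x cx.
by have := crQ (i, j, k, l); rewrite /cr /= d4.
Qed.

End Embedding.

Theorem mainTheorem14 (R : realType) (n : nat) (adj : rel 'I_n) :
  (4 <= n)%N -> (forall i j, adj i j = adj j i) -> (forall i, adj i i = false) ->
  copious R adj -> (exists v, universal_vertex adj v) ->
  topologically_copious R adj.
Proof.
move=> n_ge4 adj_sym adj_irr cop [v v_universal] r U U_basis.
have connected := connect_adj_del adj_sym v_universal n_ge4 cop.
have [c] : exists c, c \notin [:: v] by apply: exists_ord_notin; apply: leq_trans n_ge4.
rewrite inE => cv.
have [q] : exists q, q \notin [:: v; c].
  by apply: exists_ord_notin; apply: leq_trans n_ge4.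
rewrite !inE negb_or => /andP[qv qc].
have /connectP[[|d p] /= c_path q_last] := connected _ _ cv qv.
  by rewrite q_last eqxx in qc.
case/andP: c_path => /and3P[cd _ dv] _.
exact: (embedding_Phi R adj_sym adj_irr v_universal cd cv dv
  (fun i => connected c i cv) U_basis).
Qed.
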